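(* Let $\mathcal{X}$ (with metric $d_{\mathcal X}$) and $\Theta$ be compact metric spaces and let $f_\theta:\mathcal{X}\to\mathbb{R}^p$, $\theta\in\Theta$, be functions such that for each $\theta$ the image $f_\theta(\mathcal{X})$ spans $\mathbb{R}^p$ and $(x,\theta)\mapsto f_\theta(x)$ is continuous on $\mathcal{X}\times\Theta$. Suppose $p\ge 2$. Let $n_{\rm st}\in\mathbb{N}$ and $x_1,\ldots,x_{n_{\rm st}}\in\mathcal{X}$ be such that $M(\xi_{n_{\rm st}},\theta)$ is positive definite for all $\theta\in\Theta$, where $\xi_n=\frac1n\sum_{i=1}^n\delta_{x_i}$. Let $(\theta_n)_{n\ge n_{\rm st}}$ be an arbitrary sequence in $\Theta$, and let the points $x_{n+1}$, $n\ge n_{\rm st}$, be defined recursively by $$x_{n+1}\in\arg\max_{x\in\mathcal{X}} f_{\theta_n}^{\mathsf T}(x)\,M^{-1}(\xi_n,\theta_n)\,f_{\theta_n}(x).$$ Let $\varepsilon>0$ be given. Then there exist $d>0$ and $n_0\ge n_{\rm st}$ such that $\xi_n(S)\le \frac1p+\varepsilon$ for all nonempty $S\subseteq\mathcal{X}$ with $\mathrm{diam}(S)\le d$ and all $n\ge n_0$.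
   Context: A design is a finitely supported probability measure on $\mathcal{X}$; $\delta_x$ is the point mass at $x$. The information matrix of a design $\xi$ at $\theta$ is $M(\xi,\theta)=\sum_{x\in\mathrm{supp}(\xi)}\xi(x)f_\theta(x)f_\theta^{\mathsf T}(x)$ (it is positive definite for all $\xi_n$, $n\ge n_{\rm st}$, by the choice of the starting points). $\mathrm{diam}(S)=\sup\{d_{\mathcal X}(x,z):x,z\in S\}$. The recursion is the (deterministic path of the) adaptive Wynn algorithm with arbitrary parameter estimates $\theta_n$. *)

From HB Require Import structures.
From mathcomp Require Import all_boot all_order all_algebra.
From mathcomp Require Import all_classical all_reals all_analysis.
Set Implicit Arguments. Unset Strict Implicit. Unset Printing Implicit Defensive.
Import Order.TTheory GRing.Theory Num.Theory.
Import numFieldTopology.Exports numFieldNormedType.Exports.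
Local Open Scope classical_set_scope.
Local Open Scope ring_scope.

(* Regression vectors f_theta(x) are represented as row vectors 'rV[R]_p,
   so f f^T of the paper is (f x)^T *m (f x) (a p x p matrix). *)

(* The points x_1, x_2, ... are given by x : nat -> X (x 0 is unused). *)

Definition design {R : realType} {X : Type} (x : nat -> X) (n : nat) (S : set X) : R :=
  n%:R^-1 * \sum_(1 <= i < n.+1) (if `[< S (x i) >] then 1 else 0).

(* M(xi_n, theta) = sum_{x in supp xi_n} xi_n(x) f f^T
                  = (1/n) sum_{i=1}^n f_theta(x_i) f_theta(x_i)^T. *)
Definition infomat {R : realType} {X Th : Type} {p : nat}
  (f : Th -> X -> 'rV[R]_p) (x : nat -> X) (n : nat) (th : Th) : 'M[R]_p :=
  n%:R^-1 *: \sum_(1 <= i < n.+1) ((f th (x i))^T *m f th (x i)).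

Definition posdef {R : realType} {p : nat} (A : 'M[R]_p) : Prop :=
  A^T = A /\ forall v : 'rV[R]_p, v != 0 -> 0 < (v *m A *m v^T) 0 0.

Definition wynn_crit {R : realType} {X Th : Type} {p : nat}
  (f : Th -> X -> 'rV[R]_p) (x : nat -> X) (n : nat) (th : Th) (z : X) : R :=
  (f th z *m invmx (infomat f x n th) *m (f th z)^T) 0 0.

Definition diam_le {R : realType} {X : metricType R} (S : set X) (d : R) : Prop :=
  forall a b, S a -> S b -> mdist a b <= d.

From HB Require Import structures.
From mathcomp Require Import all_boot all_order all_algebra.
From mathcomp Require Import all_classical all_reals all_analysis.
From mathcomp Require Import ring lra.
Import Order.TTheory GRing.Theory Num.Theory.
Import numFieldTopology.Exports numFieldNormedType.Exports.
Local Open Scope classical_set_scope.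
Local Open Scope ring_scope.

Set Implicit Arguments. Unset Strict Implicit. Unset Printing Implicit Defensive.

(* Let N = M(xi_n, theta_n)^-1, a = f(x_{n+1}) and m = a^T N a, the maximum of the criterion
   (f = f_{theta_n}, f_i = f(x_i)).  The information matrix satisfies
   sum_{i <= n} f_i^T N f_i = n p, hence m >= p, and sum_{i <= n} (a^T N f_i)^2 = n m.
   As M(xi_nst, theta) is uniformly positive definite on the compact Theta, every basis
   vector is a combination of f_theta(x_1), ..., f_theta(x_nst) with coefficients bounded
   uniformly in theta; together with |a^T N f(z)| <= m this gives |a^T N e| <= C m |e|.
   By uniform continuity of f, a^T N f_i >= (1 - eta) m whenever x_i is close to x_{n+1}, so
   when x_{n+1} falls in a set S of small diameter, at most n / ((1 - eta)^2 p) of the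
   points x_1, ..., x_n lie in S.  Hence the number of points in S never exceeds
   (1/p + eps/2) n + nst + 1, and xi_n(S) <= 1/p + eps for n large. *)

Lemma normr_mx_entry_le (R : realDomainType) m n (A : 'M[R]_(m, n)) i j :
  `|A i j| <= `|A|.
Proof. by rewrite [leRHS]/Num.norm /= mx_normrE; apply/bigmax_geP; right; exists (i, j). Qed.

Lemma delta_mx_neq0 (R : nzRingType) m n (i : 'I_m) (j : 'I_n) :
  delta_mx i j != 0 :> 'M[R]_(m, n).
Proof. by apply/eqP => /matrixP/(_ i j); rewrite !mxE !eqxx; apply/eqP; rewrite oner_eq0. Qed.

Section MxForm.
Variables (R : realFieldType) (p : nat).
Implicit Types (M N D : 'M[R]_p) (u v w : 'rV[R]_p).

Definition mxform N u v : R := (u *m N *m v^T) 0 0.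
Definition sqnorm v : R := \sum_j v 0 j ^+ 2.
Definition psdmx N : Prop := forall v, 0 <= mxform N v v.

Lemma mxformDl N u v w : mxform N (u + v) w = mxform N u w + mxform N v w.
Proof. by rewrite /mxform !mulmxDl mxE. Qed.

Lemma mxformDr N u v w : mxform N u (v + w) = mxform N u v + mxform N u w.
Proof. by rewrite /mxform linearD /= mulmxDr mxE. Qed.

Lemma mxformZl N s u v : mxform N (s *: u) v = s * mxform N u v.
Proof. by rewrite /mxform -!scalemxAl mxE. Qed.

Lemma mxformZr N s u v : mxform N u (s *: v) = s * mxform N u v.
Proof. by rewrite /mxform linearZ /= -scalemxAr mxE. Qed.

Lemma mxformBl N u v w : mxform N (u - v) w = mxform N u w - mxform N v w.
Proof. by rewrite mxformDl -scaleN1r mxformZl mulN1r. Qed.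

Lemma mxformBr N u v w : mxform N u (v - w) = mxform N u v - mxform N u w.
Proof. by rewrite mxformDr -scaleN1r mxformZr mulN1r. Qed.

Lemma mxform_sumr N u (I : Type) (r : seq I) (P : pred I) (v : I -> 'rV[R]_p) :
  mxform N u (\sum_(i <- r | P i) v i) = \sum_(i <- r | P i) mxform N u (v i).
Proof.
apply: (big_morph (mxform N u)) => [v1 v2|]; first exact: mxformDr.
by rewrite /mxform linear0 mulmx0 mxE.
Qed.

Lemma mxformZm N s u v : mxform (s *: N) u v = s * mxform N u v.
Proof. by rewrite /mxform -scalemxAr -scalemxAl mxE. Qed.

Lemma mxformDm M N u v : mxform (M + N) u v = mxform M u v + mxform N u v.
Proof. by rewrite /mxform mulmxDr mulmxDl mxE. Qed.

Lemma mxformC N u v : N^T = N -> mxform N u v = mxform N v u.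
Proof.
move=> NT; rewrite /mxform -(trmxK (u *m N *m v^T)) [LHS]mxE.
by rewrite !trmx_mul NT trmxK mulmxA.
Qed.

Lemma sqnorm_ge0 v : 0 <= sqnorm v.
Proof. by apply: sumr_ge0 => j _; apply: sqr_ge0. Qed.

Lemma mulmx_trC u v : (u *m v^T) 0 0 = (v *m u^T) 0 0.
Proof. by rewrite -{1}(trmxK (u *m v^T)) mxE trmx_mul trmxK. Qed.

Lemma mulmx_tr_delta v (j : 'I_p) : (v *m (delta_mx 0 j : 'rV[R]_p)^T) 0 0 = v 0 j.
Proof. by rewrite trmx_delta -colE mxE. Qed.

Section Symmetric.
Variable N : 'M[R]_p.
Hypotheses (NT : N^T = N) (Npsd : psdmx N).

Lemma mxform_cauchy_schwarz u v :
  mxform N u v ^+ 2 <= mxform N u u * mxform N v v.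
Proof.
(* At [B u - A v] and [C u - B v] the form equals [A (A C - B^2)] and [C (A C - B^2)];
   if [A = C = 0], at [u - B v] it equals [- 2 B^2]. *)
set A := mxform N u u; set B := mxform N u v; set C := mxform N v v.
have expand s t : mxform N (s *: u - t *: v) (s *: u - t *: v) =
    s ^+ 2 * A - 2 * s * t * B + t ^+ 2 * C.
  by rewrite mxformBl !mxformBr !mxformZl !mxformZr (mxformC v u NT) -/A -/B -/C; ring.
have hA : 0 <= A := Npsd u; have hC : 0 <= C := Npsd v.
have [A_gt0|A_le0] := ltrP 0 A.
  have := Npsd (B *: u - A *: v); rewrite expand => h; rewrite -(ler_pM2l A_gt0); nra.
have [C_gt0|C_le0] := ltrP 0 C.
  have := Npsd (C *: u - B *: v); rewrite expand => h; rewrite -(ler_pM2l C_gt0); nra.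
have := Npsd (1 *: u - B *: v); rewrite expand; nra.
Qed.

Lemma ler_norm_mxform u v : 2 * `|mxform N u v| <= mxform N u u + mxform N v v.
Proof.
have := Npsd (u + v); have := Npsd (u - v).
rewrite mxformBl !mxformBr mxformDl !mxformDr (mxformC v u NT).
by case: (ler0P (mxform N u v)) => _; lra.
Qed.

End Symmetric.

Lemma unitmx_of_pd M : (forall v, v != 0 -> 0 < mxform M v v) -> M \in unitmx.
Proof.
move=> Mpd; rewrite -row_free_unit; apply: inj_row_free => v vM0.
by apply/eqP; apply: contraT => /Mpd; rewrite /mxform vM0 mul0mx mxE ltxx.
Qed.

Section Invertible.
Variable M : 'M[R]_p.
Hypotheses (Munit : M \in unitmx) (MT : M^T = M).

Lemma invmx_sym : (invmx M)^T = invmx M.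
Proof. by rewrite trmx_inv MT. Qed.

Lemma mxform_invmx v :
  mxform (invmx M) v v = mxform M (v *m invmx M) (v *m invmx M).
Proof.
rewrite /mxform trmx_mul invmx_sym !mulmxA.
by rewrite -(mulmxA v (invmx M) M) (mulVmx Munit) mulmx1.
Qed.

Lemma psdmx_invmx : psdmx M -> psdmx (invmx M).
Proof. by move=> Mpsd v; rewrite mxform_invmx. Qed.

Lemma entry_mxform_invmx v (j : 'I_p) : v 0 j = mxform M v ('e_j *m invmx M).
Proof.
rewrite /mxform trmx_mul invmx_sym -(mulmxA v M) (mulmxA M) mulmxV //.
by rewrite mul1mx mulmx_tr_delta.
Qed.

(* [v_j = M(v, M^-1 e_j)], so Cauchy-Schwarz gives [|v|^2 <= M(v, v) tr M^-1]. *)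
Lemma sqnorm_le_mxform : psdmx M ->
  exists2 l : R, 0 < l & forall v, l * sqnorm v <= mxform M v v.
Proof.
move=> Mpsd; have Npsd := psdmx_invmx Mpsd.
set T := \sum_j mxform (invmx M) 'e_j 'e_j.
have T_ge0 : 0 <= T by apply: sumr_ge0 => j _; apply: Npsd.
exists (1 + T)^-1 => [|v]; first by rewrite invr_gt0; lra.
rewrite mulrC ler_pdivrMr; last by lra.
have : sqnorm v <= mxform M v v * T.
  rewrite /sqnorm /T mulr_sumr; apply: ler_sum => j _.
  by rewrite entry_mxform_invmx mxform_invmx; apply: mxform_cauchy_schwarz.
by have := Mpsd v; nra.
Qed.

Lemma mxform_invmx_delta_le l (j : 'I_p) : 0 < l ->
  (forall v, l * sqnorm v <= mxform M v v) -> mxform (invmx M) 'e_j 'e_j <= l^-1.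
Proof.
move=> l_gt0 Ml; set u : 'rV[R]_p := 'e_j *m invmx M.
have uMu : mxform M u u = u 0 j by rewrite -mxform_invmx /mxform mulmx_tr_delta.
have lu : l * u 0 j ^+ 2 <= u 0 j.
  rewrite -{2}uMu; apply: le_trans (Ml u); apply: ler_wpM2l; first exact: ltW.
  by rewrite /sqnorm (bigD1 j) //= lerDl; apply: sumr_ge0 => i _; apply: sqr_ge0.
rewrite /mxform -/u mulmx_tr_delta -(ler_pM2l l_gt0) mulfV ?gt_eqF //.
by case: (ler0P (u 0 j)) => _; nra.
Qed.

End Invertible.

Lemma norm_mxform_le D a v : (forall j k, `|D j k| <= a) ->
  `|mxform D v v| <= a * p%:R * sqnorm v.
Proof.
move=> Da.
have prod_le j k : `|v 0 j * D j k * v 0 k| <= a / 2 * (v 0 j ^+ 2 + v 0 k ^+ 2).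
  have amgm : `|v 0 j| * `|v 0 k| <= (v 0 j ^+ 2 + v 0 k ^+ 2) / 2.
    rewrite -(real_normK (num_real (v 0 j))) -(real_normK (num_real (v 0 k))).
    have := sqr_ge0 (`|v 0 j| - `|v 0 k|); rewrite sqrrB; lra.
  rewrite !normrM mulrAC.
  apply: (@le_trans _ _ ((v 0 j ^+ 2 + v 0 k ^+ 2) / 2 * a)); last lra.
  by apply: ler_pM => //; apply: mulr_ge0.
have -> : mxform D v v = \sum_k \sum_j v 0 j * D j k * v 0 k.
  by rewrite /mxform mxE; apply: eq_bigr => k _; rewrite !mxE mulr_suml.
apply: (le_trans (ler_norm_sum _ _ _)).
apply: (@le_trans _ _ (\sum_k \sum_j a / 2 * (v 0 j ^+ 2 + v 0 k ^+ 2))).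
  apply: ler_sum => k _; apply: (le_trans (ler_norm_sum _ _ _)).
  by apply: ler_sum => j _; apply: prod_le.
rewrite (eq_bigr (fun k => a / 2 * sqnorm v + a / 2 * p%:R * v 0 k ^+ 2)) => [|k _].
  rewrite big_split /= sumr_const card_ord -mulr_sumr -/(sqnorm v) -mulr_natr; lra.
rewrite -mulr_sumr big_split /= sumr_const card_ord -/(sqnorm v) -mulr_natr; lra.
Qed.

End MxForm.

Section Gram.
Variables (R : realFieldType) (p : nat) (F : nat -> 'rV[R]_p).

Definition gram k : 'M[R]_p := \sum_(1 <= i < k.+1) (F i)^T *m F i.
Definition info k : 'M[R]_p := k%:R^-1 *: gram k.

Definition delta_span_le k K := forall j : 'I_p, exists c : nat -> R,
  'e_j = \sum_(1 <= i < k.+1) c i *: F i /\ forall i, (1 <= i <= k)%N -> `|c i| <= K.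

Lemma mxform_gram k u v :
  mxform (gram k) u v = \sum_(1 <= i < k.+1) (u *m (F i)^T) 0 0 * (F i *m v^T) 0 0.
Proof.
rewrite /mxform /gram mulmx_sumr mulmx_suml summxE; apply: eq_bigr => i _.
by rewrite !mulmxA -(mulmxA (u *m _)) [LHS]mxE big_ord1.
Qed.

Lemma mxform_gram_sqr k v :
  mxform (gram k) v v = \sum_(1 <= i < k.+1) (v *m (F i)^T) 0 0 ^+ 2.
Proof.
by rewrite mxform_gram; apply: eq_bigr => i _; rewrite (mulmx_trC (F i)) expr2.
Qed.

Lemma gram_sym k : (gram k)^T = gram k.
Proof. by rewrite /gram raddf_sum /=; apply: eq_bigr => i _; rewrite trmx_mul trmxK. Qed.

Lemma info_sym k : (info k)^T = info k.
Proof. by rewrite /info linearZ /= gram_sym. Qed.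

Lemma mxform_gram_mono k1 k2 v : (k1 <= k2)%N ->
  mxform (gram k1) v v <= mxform (gram k2) v v.
Proof.
move=> k12; rewrite !mxform_gram_sqr [leRHS](@big_cat_nat _ _ _ k1.+1) //=.
by rewrite lerDl; apply: sumr_ge0 => i _; apply: sqr_ge0.
Qed.

Lemma gram_psd k : psdmx (gram k).
Proof. by move=> v; rewrite mxform_gram_sqr; apply: sumr_ge0 => i _; apply: sqr_ge0. Qed.

Lemma info_psd k : psdmx (info k).
Proof. by move=> v; rewrite mxformZm mulr_ge0 ?invr_ge0 ?ler0n ?gram_psd. Qed.

Lemma norm_mxform_le_delta_span N a e k K m : delta_span_le k K ->
  (forall i, (1 <= i <= k)%N -> `|mxform N a (F i)| <= m) ->
  `|mxform N a e| <= K * k%:R * m * \sum_j `|e 0 j|.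
Proof.
move=> span am; rewrite {1}(row_sum_delta e) mxform_sumr mulr_sumr.
apply: (le_trans (ler_norm_sum _ _ _)); apply: ler_sum => j _.
rewrite mxformZr normrM mulrC ler_wpM2r //.
have [c [-> cK]] := span j; rewrite mxform_sumr.
apply: (le_trans (ler_norm_sum _ _ _)).
apply: (@le_trans _ _ (\sum_(1 <= i < k.+1) K * m)).
  rewrite big_nat [leRHS]big_nat; apply: ler_sum => i ik.
  by rewrite mxformZr normrM ler_pM // ?cK ?am.
by rewrite sumr_const_nat subn1 /= -[_ *+ k]mulr_natr mulrAC.
Qed.

Section Inverse.
Variable k : nat.
Hypotheses (k_gt0 : (0 < k)%N) (info_unit : info k \in unitmx).
Local Notation N := (invmx (info k)).

Lemma gram_info : gram k = k%:R *: info k.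
Proof. by rewrite /info scalerA divff ?scale1r // pnatr_eq0 -lt0n. Qed.

Lemma sum_mxform_invinfo : \sum_(1 <= i < k.+1) mxform N (F i) (F i) = k%:R * p%:R.
Proof.
have trE a : mxform N a a = \tr (a^T *m a *m N).
  by rewrite /mxform -trace_mx11 mxtrace_mulC mulmxA.
under eq_bigr do rewrite trE.
by rewrite -raddf_sum /= -mulmx_suml -/(gram k) gram_info -scalemxAl mulmxV // mxtraceZ mxtrace1.
Qed.

Lemma sum_sqr_mxform_invinfo v :
  \sum_(1 <= i < k.+1) mxform N v (F i) ^+ 2 = k%:R * mxform N v v.
Proof.
have NT : N^T = N by rewrite invmx_sym // info_sym.
have -> : k%:R * mxform N v v = mxform (gram k) (v *m N) (v *m N).
  by rewrite gram_info mxformZm -mxform_invmx ?info_sym.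
rewrite mxform_gram; apply: eq_bigr => i _.
by rewrite expr2 {2}(mxformC v (F i) NT) /mxform trmx_mul NT mulmxA.
Qed.

Lemma invinfo_decomp w : w = \sum_(1 <= i < k.+1) (k%:R^-1 * mxform N w (F i)) *: F i.
Proof.
have -> : \sum_(1 <= i < k.+1) (k%:R^-1 * mxform N w (F i)) *: F i = w *m N *m info k.
  rewrite [X in _ = _ *m X]/info /gram -scalemxAr mulmx_sumr scaler_sumr; apply: eq_bigr => i _.
  by rewrite mulmxA -scalerA [w *m N *m _]mx11_scalar mul_scalar_mx.
by rewrite -mulmxA mulVmx // mulmx1.
Qed.

Lemma delta_span_le_invinfo l : 0 < l ->
  (forall v, l * sqnorm v <= mxform (info k) v v) -> delta_span_le k (l^-1 + p%:R).
Proof.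
move=> l_gt0 infol j.
have NT : N^T = N by rewrite invmx_sym // info_sym.
have Npsd : psdmx N := psdmx_invmx info_unit (info_sym k) (info_psd k).
exists (fun i => k%:R^-1 * mxform N 'e_j (F i)); split => [|i ik].
  exact: invinfo_decomp.
have ejl : mxform N 'e_j 'e_j <= l^-1.
  exact: mxform_invmx_delta_le info_unit (info_sym k) _ _ l_gt0 infol.
have Fik : mxform N (F i) (F i) <= k%:R * p%:R.
  rewrite -sum_mxform_invinfo (bigD1_seq i) /= ?mem_index_iota ?iota_uniq //.
  by rewrite lerDl; apply: sumr_ge0 => i' _; apply: Npsd.
have := ler_norm_mxform NT Npsd 'e_j (F i).
have k_ge1 : 1 <= k%:R :> R by rewrite ler1n.
rewrite normrM ger0_norm ?invr_ge0 ?ler0n // [_ * `|_|]mulrC ler_pdivrMl ?ltr0n //.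
have : l^-1 <= k%:R * l^-1 by rewrite ler_peMl // invr_ge0 ltW.
have : 0 <= k%:R * p%:R :> R by rewrite -natrM ler0n.
have : 0 <= l^-1 by rewrite invr_ge0 ltW.
lra.
Qed.
End Inverse.
End Gram.

Section Uniformity.
Variable R : realType.

Lemma compact_uniform_pos (T : topologicalType) (P : R -> T -> Prop) :
  compact [set: T] -> (forall t0 : T, \forall t \near t0 & d \near (0 : R)^'+, P d t) ->
  exists2 d, 0 < d & forall t, P d t.
Proof.
move=> /compact_near_coveringP cT Ploc.
have /filter_ex[d [d_gt0 Pd]] : \forall d \near (0 : R)^'+, 0 < d /\ [set: T] `<=` P d.
  by apply: filterI; [exact: nbhs_right_gt | exact: (cT _ _ P _ (fun t0 _ => Ploc t0))].
by exists d => // t; apply: Pd.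
Qed.

Lemma continuous_sum (T : topologicalType) (I : Type) (r : seq I) (h : I -> T -> R) :
  (forall i, continuous (h i)) -> continuous (fun t => \sum_(i <- r) h i t).
Proof.
move=> hc; elim: r => [|i r IH].
  under eq_fun do rewrite big_nil; exact: cst_continuous.
under eq_fun do rewrite big_cons.
by move=> t; apply: continuousD; [exact: hc | exact: IH].
Qed.

Lemma unif_continuous_compact (X : metricType R) (T : topologicalType)
    (V : normedModType R) (g : X * T -> V) :
  compact [set: X] -> compact [set: T] -> continuous g ->
  forall e, 0 < e -> exists2 d, 0 < d &
    forall a b t, mdist a b < d -> `|g (a, t) - g (b, t)| < e.
Proof.
move=> cX cT gc e e_gt0.
have cXT : compact [set: X * T] by rewrite -setXTT; exact: compact_setX.
pose P d (q : X * T) := forall b, mdist q.1 b < d -> `|g q - g (b, q.2)| < e.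
suff [d d_gt0 Pd] : exists2 d, 0 < d & forall q, P d q.
  by exists d => // a b t; apply: (Pd (a, t)).
apply: compact_uniform_pos cXT _ => -[a0 t0].
have e2_gt0 : 0 < e / 2 by rewrite divr_gt0.
have [[A B] /= [nA nB] gAB] := cvgr_dist_lt _ _ (gc (a0, t0)) _ e2_gt0.
have [r /= r_gt0 rA] := (nbhs_ballP _ _).1 nA.
have r2_gt0 : 0 < r / 2 by rewrite divr_gt0.
exists (ball a0 (r / 2) `*` B, [set d | d < r / 2]).
  by split; [exists (ball a0 (r / 2), B) => //; split => //; exact: nbhsx_ballx
            | exact: nbhs_right_lt].
case=> -[a t] d /= [[a0a tB] dr] b ab.
move: a0a; rewrite ballEmdist /= => a0a.
have a0b : ball a0 r b.
  by rewrite ballEmdist /=; apply: le_lt_trans (metric_triangle _ a _) _; lra.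
have a0a' : ball a0 r a by rewrite ballEmdist /=; lra.
have := gAB (a, t) (conj (rA _ a0a') tB); have := gAB (b, t) (conj (rA _ a0b) tB).
move=> /= h1 h2; rewrite -(subrKA (g (a0, t0))) (le_lt_trans (ler_normD _ _)) //.
by rewrite distrC; lra.
Qed.
Lemma unif_sqnorm_le_mxform (T : topologicalType) p (G : T -> 'M[R]_p) :
  compact [set: T] -> (forall j k, continuous (fun t => G t j k)) ->
  (forall t, G t \in unitmx) -> (forall t, (G t)^T = G t) -> (forall t, psdmx (G t)) ->
  exists2 l : R, 0 < l & forall t v, l * sqnorm v <= mxform (G t) v v.
Proof.
move=> cT Gc Gu GT Gpsd.
suff Gloc : forall t0 : T, \forall t \near t0 & l \near (0 : R)^'+,
    forall v, l * sqnorm v <= mxform (G t) v v.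
  by have [l l_gt0 Gl] := compact_uniform_pos cT Gloc; exists l.
move=> t0; have [l0 l0_gt0 Gl0] := sqnorm_le_mxform (Gu t0) (GT t0) (Gpsd t0).
pose a := l0 / (2 * (p%:R + 1)).
have p_ge0 : 0 <= p%:R :> R by rewrite ler0n.
have a_gt0 : 0 < a by rewrite divr_gt0 //; lra.
have ap_le : a * p%:R <= l0 / 2 by rewrite /a mulrAC ler_pdivrMr; lra.
exists ([set t | forall j k, `|G t0 j k - G t j k| < a], [set l | l < l0 / 2]).
  split; last by apply: nbhs_right_lt; rewrite divr_gt0.
  apply: filter_forall => j; apply: filter_forall => k.
  exact: cvgr_dist_lt _ _ (Gc j k t0) _ a_gt0.
case=> t l /= [Gt0t l_lt] v.
have D_le : `|mxform (G t - G t0) v v| <= a * p%:R * sqnorm v.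
  by apply: norm_mxform_le => j k; rewrite !mxE distrC ltW.
have v_ge0 := sqnorm_ge0 v; have := Gl0 v.
have : l * sqnorm v <= l0 / 2 * sqnorm v by rewrite ler_wpM2r // ltW.
have : a * p%:R * sqnorm v <= l0 / 2 * sqnorm v by rewrite ler_wpM2r.
rewrite -(subrK (G t0) (G t)) mxformDm; move: D_le; rewrite ler_norml; lra.
Qed.

Lemma continuous_info_entry (T : topologicalType) p (F : T -> nat -> 'rV[R]_p) k j l :
  (forall i, continuous (fun t => F t i)) -> continuous (fun t => info (F t) k j l).
Proof.
move=> Fc; have entryE t : info (F t) k j l =
    k%:R^-1 * \sum_(i <- index_iota 1 k.+1) F t i 0 j * F t i 0 l.
  by rewrite mxE summxE; congr (_ * _); apply: eq_bigr => i _; rewrite mxE big_ord1 !mxE.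
rewrite (funext entryE) => t.
apply: (@continuousM _ _ (fun=> k%:R^-1)); first exact: cst_continuous.
have Fc_entry i j' : continuous (fun t => F t i 0 j').
  by move=> t'; apply: (@continuous_comp _ _ _ (F^~ i) (fun M : 'rV[R]_p => M 0 j'));
    [exact: Fc | exact: coord_continuous].
apply: continuous_sum => i {}t.
exact: continuousM (Fc_entry i j t) (Fc_entry i l t).
Qed.

End Uniformity.

Section Shrink.
Variable R : realFieldType.

(* Chosen so that [(1 - shrink a)^2 (1 + a) = 1 + shrink a ^+ 2 (1 + a) >= 1]. *)
Definition shrink (a : R) : R := a / (2 * (1 + a)).

Lemma shrink_gt0 a : 0 < a -> 0 < shrink a.
Proof. by move=> a_gt0; rewrite divr_gt0 //; lra. Qed.

Lemma shrink_le1 a : 0 <= a -> shrink a <= 1.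
Proof. by move=> a_ge0; rewrite ler_pdivrMr; lra. Qed.

Lemma shrink_sqr_bound V k m q eps : 0 <= V -> 0 < q -> q <= m -> 0 < eps ->
  V * ((1 - shrink (q * eps)) * m) ^+ 2 <= k * m -> V <= (q^-1 + eps) * k.
Proof.
move=> V_ge0 q_gt0 qm eps_gt0 Vm; set a := q * eps; set eta := shrink a.
have a_gt0 : 0 < a by rewrite mulr_gt0.
have m_gt0 : 0 < m by lra.
have Vk : V * (1 - eta) ^+ 2 * q <= k.
  apply: le_trans (_ : V * (1 - eta) ^+ 2 * m <= _).
    by rewrite ler_wpM2l // mulr_ge0 // sqr_ge0.
  rewrite -(ler_pM2r m_gt0).
  by have -> : V * (1 - eta) ^+ 2 * m * m = V * ((1 - eta) * m) ^+ 2 by ring.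
have one_le : 1 <= (1 - eta) ^+ 2 * (1 + a).
  have -> : (1 - eta) ^+ 2 * (1 + a) = 1 + eta ^+ 2 * (1 + a).
    by rewrite /eta /shrink; field; lra.
  by rewrite lerDl mulr_ge0 ?sqr_ge0 //; lra.
have -> : q^-1 + eps = (1 + a) / q by rewrite /a; field; rewrite gt_eqF.
rewrite mulrAC ler_pdivlMr //.
have := ler_wpM2l (mulr_ge0 V_ge0 (ltW q_gt0)) one_le.
have := ler_wpM2l (_ : 0 <= 1 + a) Vk; lra.
Qed.

End Shrink.

Section Visits.
Variable R : archiRealFieldType.
Implicit Types (P : nat -> Prop) (n : nat).

Definition visits P n : R := \sum_(1 <= i < n.+1) (if `[< P i >] then 1 else 0).

Lemma visits_le_n P n : visits P n <= n%:R.
Proof.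
apply: (@le_trans _ _ (\sum_(1 <= i < n.+1) (1 : R))).
  by apply: ler_sum => i _; case: asboolP.
by rewrite sumr_const_nat subn1.
Qed.

Lemma visits_sqr_le P (y : nat -> R) b n : 0 <= b ->
  (forall i, (1 <= i <= n)%N -> P i -> b <= y i) ->
  visits P n * b ^+ 2 <= \sum_(1 <= i < n.+1) y i ^+ 2.
Proof.
move=> b_ge0 Py; rewrite /visits mulr_suml big_nat [leRHS]big_nat.
apply: ler_sum => i i_n; case: asboolP => [Pi | _]; last by rewrite mul0r sqr_ge0.
by rewrite mul1r !expr2 ler_pM // Py.
Qed.

Lemma visits_le_affine P n1 (al : R) : 0 <= al ->
  (forall k, (n1 <= k)%N -> P k.+1 -> visits P k <= al * k%:R) ->
  forall n, (n1 <= n)%N -> visits P n <= al * n%:R + n1%:R + 1.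
Proof.
move=> al_ge0 hP; elim=> [|n IH] n1n.
  by rewrite /visits big_geq // mulr0 add0r addr_ge0 ?ler0n.
have al_n : al * n%:R <= al * n.+1%:R by rewrite ler_wpM2l // ler_nat.
have [n1_le|n_lt] := leqP n1 n; last first.
  have <- : n1 = n.+1 by apply/eqP; rewrite eqn_leq n1n.
  by have := visits_le_n P n1; have := mulr_ge0 al_ge0 (ler0n R n1); lra.
rewrite /visits big_nat_recr //= -/(visits P n); case: asboolP => [Pn | _].
  by have := hP n n1_le Pn; have := ler0n R n1; lra.
by have := IH n1_le; have := ler0n R n1; lra.
Qed.

Lemma visits_frequency_le n1 (al e : R) : 0 <= al -> 0 < e ->
  exists n0, (n1 <= n0)%N /\ forall P,
    (forall k, (n1 <= k)%N -> P k.+1 -> visits P k <= al * k%:R) ->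
    forall n, (n0 <= n)%N -> n%:R^-1 * visits P n <= al + e.
Proof.
move=> al_ge0 e_gt0; set b := (n1%:R + 1) / e.
have b_ge0 : 0 <= b by rewrite divr_ge0 ?ltW // addr_ge0 ?ler0n.
exists (n1 + Num.Def.archi_bound b)%N; split => [|P hP n n0n]; first exact: leq_addr.
have b_lt : b < n%:R.
  apply: lt_le_trans (archi_boundP b_ge0) _.
  by rewrite ler_nat (leq_trans (leq_addl _ _) n0n).
have n_gt0 : 0 < n%:R :> R by apply: le_lt_trans b_lt.
have := visits_le_affine al_ge0 hP (leq_trans (leq_addr _ _) n0n).
move: b_lt; rewrite ltr_pdivrMr // mulrC ler_pdivrMl //; lra.
Qed.

End Visits.

Arguments visits {R} P n.

Section WynnAlgorithm.
Variables (R : realType) (X Th : metricType R) (p : nat) (f : Th -> X -> 'rV[R]_p).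
Hypotheses (cX : compact [set: X]) (cTh : compact [set: Th]).
Hypotheses (f_cont : continuous (fun z : X * Th => f z.2 z.1)) (p_gt0 : (0 < p)%N).
Variables (nst : nat) (x : nat -> X) (theta : nat -> Th).
Hypothesis start_pd : forall th, posdef (infomat f x nst th).
Hypothesis wynn_max : forall n, (nst <= n)%N -> forall z,
  wynn_crit f x n (theta n) z <= wynn_crit f x n (theta n) (x n.+1).

Local Notation F th := (fun i => f th (x i)).

Lemma infomatE n th : infomat f x n th = info (F th) n.
Proof. by []. Qed.

Lemma nst_gt0 : (0 < nst)%N.
Proof.
case: nst start_pd => // /(_ (theta 0)) [_ /(_ _ (delta_mx_neq0 _ 0 (Ordinal p_gt0)))].
by rewrite /infomat big_geq // scaler0 /mxform mulmx0 mul0mx mxE ltxx.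
Qed.

Lemma infomat_pd n th : (nst <= n)%N ->
  forall v, v != 0 -> 0 < mxform (infomat f x n th) v v.
Proof.
move=> nst_n v v_neq0.
have : 0 < mxform (infomat f x nst th) v v := (start_pd th).2 v v_neq0.
have n_gt0 : (0 < n)%N := leq_trans nst_gt0 nst_n.
rewrite !infomatE !mxformZm !pmulr_rgt0 ?invr_gt0 ?ltr0n ?nst_gt0 // => Gv.
by apply: lt_le_trans Gv _; apply: mxform_gram_mono.
Qed.

Lemma infomat_unit n th : (nst <= n)%N -> infomat f x n th \in unitmx.
Proof. by move=> nst_n; apply: unitmx_of_pd; exact: infomat_pd. Qed.

Lemma nst_delta_span : exists2 K, 0 < K & forall th, delta_span_le (F th) nst K.
Proof.
have f_cont_th z : continuous (f^~ z).
  move=> th; apply: (@continuous_comp _ _ _ (fun th => (z, th)) (fun q => f q.2 q.1)).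
    by apply: cvg_pair; [exact: cvg_cst | exact: cvg_id].
  exact: f_cont.
have info_cont j k : continuous (fun th => infomat f x nst th j k).
  exact: continuous_info_entry (fun i => f_cont_th (x i)).
have [l l_gt0 infol] := unif_sqnorm_le_mxform cTh info_cont
  (fun th => infomat_unit th (leqnn nst)) (fun th => (start_pd th).1)
  (fun th => info_psd (F th) nst).
exists (l^-1 + p%:R) => [|th]; first by rewrite addr_gt0 ?invr_gt0 ?ltr0n.
by apply: (delta_span_le_invinfo nst_gt0 (infomat_unit th (leqnn nst))) => // v; apply: infol.
Qed.

Lemma wynn_critE n th z :
  wynn_crit f x n th z = mxform (invmx (infomat f x n th)) (f th z) (f th z).
Proof. by []. Qed.

Lemma wynn_crit_ge_p k : (nst <= k)%N -> p%:R <= wynn_crit f x k (theta k) (x k.+1).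
Proof.
move=> nst_k; have k_gt0 : (0 < k)%N := leq_trans nst_gt0 nst_k.
set m := wynn_crit _ _ _ _ _.
have : \sum_(1 <= i < k.+1) wynn_crit f x k (theta k) (x i) <= \sum_(1 <= i < k.+1) m.
  by apply: ler_sum => i _; apply: wynn_max.
rewrite (sum_mxform_invinfo k_gt0 (infomat_unit (theta k) nst_k)).
by rewrite sumr_const_nat subn1 /= -[m *+ k]mulr_natl ler_pM2l ?ltr0n.
Qed.

Lemma wynn_cross_ge_near eta : 0 < eta -> exists2 d, 0 < d & forall k z, (nst <= k)%N ->
  mdist (x k.+1) z < d ->
  (1 - eta) * wynn_crit f x k (theta k) (x k.+1) <=
  mxform (invmx (infomat f x k (theta k))) (f (theta k) (x k.+1)) (f (theta k) z).
Proof.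
move=> eta_gt0; have [K K_gt0 span] := nst_delta_span.
have p_pos : 0 < p%:R :> R by rewrite ltr0n.
have nst_pos : 0 < nst%:R :> R by rewrite ltr0n nst_gt0.
set del := eta / (K * nst%:R * p%:R).
have del_gt0 : 0 < del by rewrite divr_gt0 // !mulr_gt0.
have [d d_gt0 f_close] := unif_continuous_compact cX cTh f_cont del_gt0.
exists d => // k z nst_k xz; rewrite wynn_critE.
set th := theta k; set N := invmx _; set a := f th (x k.+1).
have Nunit := infomat_unit th nst_k.
have NT : N^T = N := invmx_sym (info_sym _ _).
have Npsd : psdmx N := psdmx_invmx Nunit (info_sym _ _) (info_psd _ _).
have m_ge : p%:R <= mxform N a a by rewrite -wynn_critE wynn_crit_ge_p.
have a_le z' : `|mxform N a (f th z')| <= mxform N a a.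
  have := ler_norm_mxform NT Npsd a (f th z'); have := wynn_max nst_k z'.
  by rewrite !wynn_critE; lra.
set e := a - f th z.
have e_le : \sum_j `|e 0 j| <= p%:R * del.
  apply: (@le_trans _ _ (\sum_(j < p) `|e|)).
    by apply: ler_sum => j _; apply: normr_mx_entry_le.
  rewrite sumr_const card_ord -[_ *+ p]mulr_natl; apply: ler_wpM2l; first exact: ler0n.
  exact/ltW/f_close.
have := norm_mxform_le_delta_span e (span th) (fun i _ => a_le (x i)).
rewrite mxformBr ler_norml => /andP[_ ae_le].
have : K * nst%:R * mxform N a a * \sum_j `|e 0 j| <= eta * mxform N a a.
  have -> : eta * mxform N a a = K * nst%:R * mxform N a a * (p%:R * del).
    by rewrite /del; field; rewrite !gt_eqF.
  by apply: ler_wpM2l e_le; rewrite !mulr_ge0 ?ltW //; lra.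
lra.
Qed.

Lemma wynn_visits_le eps : 0 < eps -> exists2 d, 0 < d & forall k S, (nst <= k)%N ->
  diam_le S d -> S (x k.+1) -> (visits (fun i => S (x i)) k : R) <= (p%:R^-1 + eps) * k%:R.
Proof.
move=> eps_gt0; have p_pos : 0 < p%:R :> R by rewrite ltr0n.
have a_gt0 : 0 < p%:R * eps by rewrite mulr_gt0.
have [d d_gt0 near] := wynn_cross_ge_near (shrink_gt0 a_gt0).
exists (d / 2) => [|k S nst_k Sd Sk]; first by rewrite divr_gt0.
have k_gt0 : (0 < k)%N := leq_trans nst_gt0 nst_k.
have m_ge := wynn_crit_ge_p nst_k; rewrite wynn_critE in m_ge.
apply: (shrink_sqr_bound _ p_pos m_ge eps_gt0).
  by apply: sumr_ge0 => i _; case: asboolP.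
rewrite -(sum_sqr_mxform_invinfo k_gt0 (infomat_unit (theta k) nst_k)).
apply: visits_sqr_le => [|i _ Si].
  by rewrite mulr_ge0 //; [have := shrink_le1 (ltW a_gt0); lra | lra].
apply: (near k (x i) nst_k).
by apply: le_lt_trans (Sd _ _ Sk Si) _; rewrite ltr_pdivrMr // ltr_pMr // ltr1n.
Qed.

End WynnAlgorithm.

Theorem lemma2p2 (R : realType) (X Th : metricType R) (p : nat)
  (f : Th -> X -> 'rV[R]_p)
  (hX : compact [set: X]) (hTh : compact [set: Th])
  (hspan : forall th : Th, exists s : seq X,
      (<<map (f th) s>>%VS = fullv))
  (hcont : continuous (fun z : X * Th => f z.2 z.1))
  (hp : (2 <= p)%N)
  (nst : nat) (x : nat -> X)
  (hst : forall th : Th, posdef (infomat f x nst th))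
  (theta : nat -> Th)
  (hrec : forall n : nat, (nst <= n)%N -> forall z : X,
      wynn_crit f x n (theta n) z <= wynn_crit f x n (theta n) (x n.+1))
  (eps : R) (heps : 0 < eps) :
  exists d : R, 0 < d /\ exists n0 : nat, (nst <= n0)%N /\
    forall (S : set X), S !=set0 -> diam_le S d ->
    forall n : nat, (n0 <= n)%N -> design x n S <= p%:R^-1 + eps.
Proof.
have eps2_gt0 : 0 < eps / 2 by rewrite divr_gt0.
have [d d_gt0 local] := wynn_visits_le hX hTh hcont (ltnW hp) hst hrec eps2_gt0.
have al_ge0 : 0 <= p%:R^-1 + eps / 2 :> R by rewrite addr_ge0 ?invr_ge0 ?ler0n ?ltW.
have [n0 [nst_n0 freq]] := visits_frequency_le nst al_ge0 eps2_gt0.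
exists d; split => //; exists n0; split => // S _ Sd n n0n.
rewrite [eps in leRHS]splitr addrA.
exact: freq (fun k nst_k Sk => local k S nst_k Sd Sk) n n0n.
Qed.
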